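(* There exists an infinite word $w$ over the alphabet $\{0,1,2\}$ such that $w^{0\cup1}$, $w^{0\cup2}$ and $w^{1\cup2}$ are all weak abelian periodic, while $w$ itself is not weak abelian periodic.
   Context: For an infinite word $w$ over an alphabet $\Sigma$ and distinct letters $a,b\in\Sigma$, $w^{a\cup b}$ denotes the image of $w$ under the letter-to-letter morphism sending $b\mapsto a$ and $x\mapsto x$ for every $x\neq b$ (i.e. the letters $a$ and $b$ are identified). For a finite word $u$, $|u|_a$ is the number of occurrences of $a$ in $u$ and $\rho_a(u)=|u|_a/|u|$ for nonempty $u$. An infinite word $w$ over $\Sigma$ is weak abelian periodic if $w=v_0v_1v_2\cdots$ with $v_0$ finite and $v_1,v_2,\dots$ nonempty finite words such that $\rho_a(v_i)=\rho_a(v_j)$ for all $a\in\Sigma$ and all $i,j\ge1$. *)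

From mathcomp Require Import all_boot all_algebra.
Set Implicit Arguments. Unset Strict Implicit. Unset Printing Implicit Defensive.
Import GRing.Theory Num.Theory.

Definition occ (S : eqType) (w : nat -> S) (a : S) (m n : nat) : nat :=
  \sum_(m <= k < n) (w k == a).

Definition rho (S : eqType) (w : nat -> S) (a : S) (m n : nat) : rat :=
  ((occ w a m n)%:R / (n - m)%:R)%R.

(* w = v_0 v_1 v_2 ... with v_0 = w[0, p 0) and v_{i+1} = w[p i, p (i+1)),
   all v_{i+1} nonempty (p strictly increasing) and having the same
   letter frequencies. *)
Definition weak_abelian_periodic (S : eqType) (w : nat -> S) : Prop :=
  exists p : nat -> nat,
    (forall i, p i < p i.+1) /\
    (forall (a : S) (i j : nat), rho w a (p i) (p i.+1) = rho w a (p j) (p j.+1)).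

Definition identify (S : eqType) (a b : S) (w : nat -> S) : nat -> S :=
  fun n => if w n == b then a else w n.

Definition l0 : 'I_3 := @Ordinal 3 0 isT.
Definition l1 : 'I_3 := @Ordinal 3 1 isT.
Definition l2 : 'I_3 := @Ordinal 3 2 isT.

From mathcomp Require Import all_boot all_algebra zify.
Set Implicit Arguments. Unset Strict Implicit. Unset Printing Implicit Defensive.
Import GRing.Theory Num.Theory.

(* The word is the concatenation over k of the stages
   (112)^{3k} (022)^{3k} (001)^{3k} 000.  Write X_a(n) = 3|w[0,n)|_a - n.
   The blocks 112, 022, 001 shift (X_0, X_1, X_2) by (-3,3,0), (0,-3,3) and
   (3,0,-3), so during stage k the excesses rotate: each letter in turn goes
   down from 6k to -3k while the others stay in [-3k, 6k].  Hence every letter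
   c has infinitely many prefixes with X_c = 0; cutting w at them makes the
   two-letter word w^{a U b} (c the third letter) weak abelian periodic with
   frequencies 2/3 and 1/3.  On the other hand |X_a(n)| = O(sqrt n), so along
   the cuts of a weak abelian periodic factorisation of w every letter has
   frequency exactly 1/3 and X_a stays constant; but at every position of
   stage k some letter has X_a <= 4 - 3k, and k is unbounded. *)

Lemma increasing_ge (p : nat -> nat) : (forall i, p i < p i.+1) ->
  forall i, p 0 + i <= p i.
Proof. by move=> incr; elim=> [|i IH]; [rewrite addn0 | have := incr i; lia]. Qed.

Lemma increasing_enum (P : pred nat) : (forall m, exists n, m < n /\ P n) ->
  exists q : nat -> nat, (forall i, q i < q i.+1) /\ (forall i, P (q i)).
Proof.
move=> infP.
have next m : exists n, (m < n) && P n.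
  by have [n [mn Pn]] := infP m; exists n; rewrite mn.
pose q := fix q i := if i is i'.+1 then xchoose (next (q i')) else xchoose (next 0).
exists q; split=> [i | [|i]]; first by case/andP: (xchooseP (next (q i))).
- by case/andP: (xchooseP (next 0)).
- by case/andP: (xchooseP (next (q i))).
Qed.

Lemma sq_le_affine k n A B : k * k <= n -> n <= A + B * k -> n <= (A + B) * (A + B).+1.
Proof.
move=> kkn nAB; have [kAB | ABk] := leqP k (A + B); first nia.
have : A + B * k < k * k by nia.
lia.
Qed.

Section Occurrences.
Variables (S : eqType) (v : nat -> S).

Lemma occ_cat a m n p : m <= n -> n <= p -> occ v a m p = occ v a m n + occ v a n p.
Proof. by move=> mn np; rewrite /occ (big_cat_nat mn np). Qed.

Lemma occ_le a m n : occ v a m n <= n - m.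
Proof.
rewrite /occ -[n - m]muln1 -sum_nat_const_nat.
by apply: leq_sum => i _; case: (v i == a).
Qed.

Lemma occ_two_letters a c m n : (forall k, (v k == a) = (v k != c)) ->
  occ v a m n + occ v c m n = n - m.
Proof.
move=> vac; rewrite /occ -big_split /= -[n - m]muln1 -sum_nat_const_nat.
by apply: eq_bigr => k _; rewrite vac; case: (v k == c).
Qed.

Lemma occ_identify_other a b c m n :
  a != c -> b != c -> occ (identify a b v) c m n = occ v c m n.
Proof.
move=> ac bc; apply: eq_bigr => k _; rewrite /identify.
by case: (v k =P b) => // ->; rewrite (negPf ac) (negPf bc).
Qed.

Lemma wap_of_block_densities (q : nat -> nat) (f : S -> rat) :
  (forall i, q i < q i.+1) ->
  (forall a i, (occ v a (q i) (q i.+1))%:R = f a * (q i.+1 - q i)%:R)%R ->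
  weak_abelian_periodic v.
Proof.
move=> incr dens; exists q; split=> // a.
suff rho_f i : rho v a (q i) (q i.+1) = f a by move=> i j; rewrite !rho_f.
by rewrite /rho dens mulfK // pnatr_eq0 -lt0n subn_gt0.
Qed.

Lemma wap_of_two_letters (a c : S) (r : rat) :
  (forall n, (v n == a) = (v n != c)) ->
  (forall m, exists n, m < n /\ ((occ v c 0 n)%:R = r * n%:R)%R) ->
  weak_abelian_periodic v.
Proof.
move=> vac balanced.
have [q [incr qP]] : exists q, (forall i, q i < q i.+1) /\
    forall i, ((occ v c 0 (q i))%:R == r * (q i)%:R)%R.
  apply: (increasing_enum (P := fun n => ((occ v c 0 n)%:R == r * n%:R)%R)) => m.
  by have [n [mn /eqP bal]] := balanced m; exists n.
pose f x := (if x == c then r else if x == a then 1 - r else 0)%R.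
apply: (@wap_of_block_densities q f) => // x i.
have le_qi : q i <= q i.+1 := ltnW (incr i).
have occ_c : ((occ v c (q i) (q i.+1))%:R = r * (q i.+1 - q i)%:R)%R.
  move: (occ_cat c (leq0n _) le_qi) => /(congr1 (fun k => k%:R : rat)).
  by rewrite natrD !(eqP (qP _)) natrB // => /eqP; rewrite mulrBr addrC -subr_eq => /eqP.
rewrite /f; case: eqP => [-> // | /eqP x_c].
case: eqP => [-> | /eqP x_a].
  move: (occ_two_letters (q i) (q i.+1) vac) => /(congr1 (fun k => k%:R : rat)).
  by rewrite natrD occ_c => E; apply/eqP; rewrite mulrBl mul1r eq_sym subr_eq E.
rewrite mul0r /occ big1 // => k _; case: eqP => // vkx.
by move: (vac k); rewrite vkx (negPf x_a) x_c.
Qed.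

Lemma occ_block_proportional (p : nat -> nat) :
  (forall i, p i < p i.+1) ->
  (forall a i j, rho v a (p i) (p i.+1) = rho v a (p j) (p j.+1)) ->
  forall a i, occ v a (p 0) (p i) * (p 1 - p 0) = occ v a (p 0) (p 1) * (p i - p 0).
Proof.
move=> incr same_rho a; have p0i := increasing_ge incr.
have block i : occ v a (p i) (p i.+1) * (p 1 - p 0) = occ v a (p 0) (p 1) * (p i.+1 - p i).
  move/eqP: (same_rho a i 0); rewrite /rho eqr_div ?pnatr_eq0 -?lt0n ?subn_gt0 //.
  by rewrite -!natrM eqr_nat => /eqP.
elim=> [|i IH]; first by rewrite /occ big_geq // subnn muln0.
have [le_p0i le_pi] : p 0 <= p i /\ p i <= p i.+1 by have := incr i; have := p0i i; lia.
rewrite (occ_cat a le_p0i le_pi) mulnDl IH block -mulnDr; congr (_ * _); lia.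
Qed.

Section NotWeakAbelianPeriodic.
Variable C : nat.

Hypothesis balanced : forall a n, exists k,
  [/\ k * k <= n, n <= 3 * occ v a 0 n + C * k.+1 & 3 * occ v a 0 n <= n + C * k.+1].

Lemma block_density_one_third (p : nat -> nat) a L O :
  (forall i, p i < p i.+1) -> 0 < L ->
  (forall i, occ v a (p 0) (p i) * L = O * (p i - p 0)) -> 3 * O = L.
Proof.
move=> incr L_gt0 prop; apply/eqP; apply: contraT => OL.
set A := 3 * L * p 0 + L * C; set B := L * C.
set i := ((A + B) * (A + B).+1).+1.
have p0i := increasing_ge incr i.
have [k [kk lo hi]] := balanced a (p i).
have := occ_cat a (leq0n (p 0)) (leq_trans (leq_addr _ _) p0i).
move: (prop i) (occ_le a 0 (p 0)) => {}prop occ_p0 occ_pi.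
suff : p i <= A + B * k by move/(sq_le_affine kk); lia.
rewrite occ_pi in lo hi.
by move: OL; rewrite neq_ltn => /orP[] ?; nia.
Qed.

Hypothesis dips : forall c, exists N, forall n, N <= n ->
  exists a, 3 * occ v a 0 n + c <= n.

Lemma not_wap_of_balanced_with_dips : ~ weak_abelian_periodic v.
Proof.
case=> p [incr same_rho]; set L := p 1 - p 0.
have L_gt0 : 0 < L by rewrite subn_gt0.
have prop := occ_block_proportional incr same_rho.
have one_third a i : 3 * occ v a (p 0) (p i) = p i - p 0.
  apply/eqP; rewrite -(eqn_pmul2r L_gt0) -mulnA prop mulnA.
  by rewrite (block_density_one_third incr L_gt0 (prop a)) mulnC.
have [N dipN] := dips (p 0).+1.
have p0N := increasing_ge incr N.
have [a dip] := dipN (p N) (leq_trans (leq_addl _ _) p0N).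
have := occ_cat a (leq0n (p 0)) (leq_trans (leq_addr _ _) p0N).
by move=> occ_pN; move: dip (one_third a N); rewrite occ_pN; lia.
Qed.

End NotWeakAbelianPeriodic.
End Occurrences.

Lemma mem_uniq3 (a b c x : 'I_3) : uniq [:: a; b; c] -> x \in [:: a; b; c].
Proof.
move=> abc; have /subset_cardP : #|[:: a; b; c]| = #|'I_3|.
  by rewrite card_ord (card_uniqP abc).
by move=> /(_ (subset_predT _)) ->.
Qed.

Lemma identify_two_letters (a b c : 'I_3) (v : nat -> 'I_3) n :
  uniq [:: a; b; c] -> (identify a b v n == a) = (identify a b v n != c).
Proof.
move=> abc; have := abc; rewrite /= !inE => /and3P[/norP[_ ac] _ _].
rewrite /identify; case: (v n =P b) => [_|/eqP vb]; first by rewrite eqxx ac.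
have := mem_uniq3 (v n) abc; rewrite !inE (negPf vb) /=.
by case/orP=> /eqP ->; rewrite eqxx ?ac // eq_sym (negPf ac).
Qed.

Lemma wap_identify (a b c : 'I_3) (v : nat -> 'I_3) : uniq [:: a; b; c] ->
  (forall m, exists n, m < n /\ 3 * occ v c 0 n = n) ->
  weak_abelian_periodic (identify a b v).
Proof.
move=> abc balanced; have := abc; rewrite /= !inE => /and3P[/norP[_ ac] bc _].
apply: (@wap_of_two_letters _ _ a c (3%:R)^-1) => [n | m].
  exact: identify_two_letters.
have [n [mn bal]] := balanced m; exists n; split=> //.
have -> : (n%:R : rat) = (3%:R * (occ v c 0 n)%:R)%R by rewrite -natrM bal.
by rewrite occ_identify_other // mulKf ?pnatr_eq0.
Qed.

Definition rep (T : Type) (n : nat) (s : seq T) : seq T := flatten (nseq n s).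

Lemma size_rep (T : Type) n (s : seq T) : size (rep n s) = n * size s.
Proof. by elim: n => //= n IH; rewrite size_cat IH mulSn. Qed.

Lemma count_rep (T : Type) (P : pred T) n s : count P (rep n s) = n * count P s.
Proof. by elim: n => //= n IH; rewrite count_cat IH mulSn. Qed.

Lemma take_size_add_cat (T : Type) (s r : seq T) m :
  take (size s + m) (s ++ r) = s ++ take m r.
Proof. by rewrite takeD take_size_cat // drop_size_cat. Qed.

Lemma take_rep_cat (T : Type) n j (s r : seq T) : j <= n ->
  take (size s * j) (rep n s ++ r) = rep j s.
Proof.
elim: j n => [|j IH] [|n] // jn; rewrite ?muln0 ?take0 //.
by rewrite mulnS /rep /= -catA take_size_add_cat IH.
Qed.

Definition stage (k : nat) : seq 'I_3 :=
  rep (3 * k) [:: l1; l1; l2] ++ rep (3 * k) [:: l0; l2; l2] ++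
  rep (3 * k) [:: l0; l0; l1] ++ [:: l0; l0; l0].

Fixpoint prefix (k : nat) : seq 'I_3 :=
  if k is k'.+1 then prefix k' ++ stage k' else [::].

(* [prefix n.+1] has more than [n] letters, so the default [l0] is never read. *)
Definition word (n : nat) : 'I_3 := nth l0 (prefix n.+1) n.

Lemma size_prefixS k : size (prefix k.+1) = size (prefix k) + 27 * k + 3.
Proof. by rewrite /= !size_cat !size_rep /=; lia. Qed.

Lemma size_prefix_bounds k : k * k <= size (prefix k) <= 27 * k * k.
Proof. by elim: k => [|k IH] //; rewrite size_prefixS; nia. Qed.

Lemma prefix_prefix m n : m <= n -> exists s, prefix n = prefix m ++ s.
Proof.
move/subnK <-; elim: (n - m) => [|d [s IH]]; first by exists [::]; rewrite cats0.
by exists (s ++ stage (d + m)); rewrite addSn /= IH catA.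
Qed.

Lemma word_prefix k n : n < size (prefix k) -> word n = nth l0 (prefix k) n.
Proof.
move=> nk; rewrite /word; have [kn | nk'] := leqP k n.+1.
  by have [s ->] := prefix_prefix kn; rewrite nth_cat nk.
have [s ->] := prefix_prefix (ltnW nk'); rewrite nth_cat.
by have /andP[+ _] := size_prefix_bounds n.+1; case: ifPn => //; nia.
Qed.

Lemma occ_word_prefix a k n : n <= size (prefix k) ->
  occ word a 0 n = count_mem a (take n (prefix k)).
Proof.
elim: n => [|n IH] nk; first by rewrite /occ big_geq // take0.
rewrite /occ big_nat_recr //= -/(occ _ _ _ _) IH 1?ltnW //.
by rewrite (take_nth l0 nk) -cats1 count_cat (word_prefix nk) /= addn0.
Qed.

Lemma exists_stage n : exists k, size (prefix k) <= n < size (prefix k.+1).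
Proof.
elim: n => [|n [k /andP[kn nk]]]; first by exists 0.
have [nk' | kn'] := ltnP n.+1 (size (prefix k.+1)); first by exists k; rewrite nk' ltnW.
by exists k.+1; rewrite kn' size_prefixS; lia.
Qed.

Lemma count_prefix k :
  [/\ 3 * count_mem l0 (prefix k) = size (prefix k) + 6 * k,
      3 * count_mem l1 (prefix k) + 3 * k = size (prefix k) &
      3 * count_mem l2 (prefix k) + 3 * k = size (prefix k)].
Proof.
elim: k => [|k [IH0 IH1 IH2]] //; rewrite size_prefixS /= !count_cat !count_rep /=.
move: IH0 IH1 IH2; set x0 := count_mem l0 _; set x1 := count_mem l1 _.
by set x2 := count_mem l2 _; split; lia.
Qed.

Lemma occ_word_stage a k j : j <= 9 * k ->
  occ word a 0 (size (prefix k) + 3 * j) =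
  count_mem a (prefix k) + count_mem a (take (3 * j) (stage k)).
Proof.
move=> jk; rewrite (@occ_word_prefix a k.+1); last by rewrite size_prefixS; lia.
by rewrite /= take_size_add_cat count_cat.
Qed.

Lemma take_stage1 k t : t <= 3 * k -> take (3 * t) (stage k) = rep t [:: l1; l1; l2].
Proof. exact: take_rep_cat. Qed.

Lemma take_stage2 k t : t <= 3 * k ->
  take (3 * (3 * k + t)) (stage k) = rep (3 * k) [:: l1; l1; l2] ++ rep t [:: l0; l2; l2].
Proof.
move=> tk; have -> : 3 * (3 * k + t) = size (rep (3 * k) [:: l1; l1; l2]) + 3 * t.
  by rewrite size_rep /=; lia.
by rewrite take_size_add_cat (@take_rep_cat _ _ _ [:: l0; l2; l2]).
Qed.

Lemma take_stage3 k t : t <= 3 * k ->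
  take (3 * (6 * k + t)) (stage k) =
  rep (3 * k) [:: l1; l1; l2] ++ rep (3 * k) [:: l0; l2; l2] ++ rep t [:: l0; l0; l1].
Proof.
move=> tk; have -> : 3 * (6 * k + t) =
    size (rep (3 * k) [:: l1; l1; l2] ++ rep (3 * k) [:: l0; l2; l2]) + 3 * t.
  by rewrite size_cat !size_rep /=; lia.
by rewrite /stage catA take_size_add_cat (@take_rep_cat _ _ _ [:: l0; l0; l1]) // catA.
Qed.

Lemma occ_word_segment1 k t : t <= 3 * k -> let n := size (prefix k) + 3 * t in
  [/\ 3 * occ word l0 0 n + 3 * t = n + 6 * k,
      3 * occ word l1 0 n + 3 * k = n + 3 * t &
      3 * occ word l2 0 n + 3 * k = n].
Proof.
move=> tk n; rewrite /n !occ_word_stage 1?take_stage1 ?count_rep /=; try lia.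
have [] := count_prefix k; set x0 := count_mem l0 _; set x1 := count_mem l1 _.
by set x2 := count_mem l2 _; split; lia.
Qed.

Lemma occ_word_segment2 k t : t <= 3 * k -> let n := size (prefix k) + 3 * (3 * k + t) in
  [/\ 3 * occ word l1 0 n + 3 * t = n + 6 * k,
      3 * occ word l2 0 n + 3 * k = n + 3 * t &
      3 * occ word l0 0 n + 3 * k = n].
Proof.
move=> tk n; rewrite /n !occ_word_stage 1?take_stage2 ?count_cat ?count_rep /=; try lia.
have [] := count_prefix k; set x0 := count_mem l0 _; set x1 := count_mem l1 _.
by set x2 := count_mem l2 _; split; lia.
Qed.

Lemma occ_word_segment3 k t : t <= 3 * k -> let n := size (prefix k) + 3 * (6 * k + t) in
  [/\ 3 * occ word l2 0 n + 3 * t = n + 6 * k,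
      3 * occ word l0 0 n + 3 * k = n + 3 * t &
      3 * occ word l1 0 n + 3 * k = n].
Proof.
move=> tk n; rewrite /n !occ_word_stage 1?take_stage3 ?count_cat ?count_rep /=; try lia.
have [] := count_prefix k; set x0 := count_mem l0 _; set x1 := count_mem l1 _.
by set x2 := count_mem l2 _; split; lia.
Qed.

Lemma occ_word_block k j : j <= 9 * k ->
  let n := size (prefix k) + 3 * j in
  exists x y z t, [/\ uniq [:: x; y; z], t <= 3 * k,
    3 * occ word x 0 n + 3 * t = n + 6 * k,
    3 * occ word y 0 n + 3 * k = n + 3 * t &
    3 * occ word z 0 n + 3 * k = n].
Proof.
move=> jk n; have [j1 | j1] := leqP j (3 * k).
  by exists l0, l1, l2, j; case: (occ_word_segment1 j1) => *; split.
have [j2 | j2] := leqP j (6 * k).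
  have t2 : j - 3 * k <= 3 * k by lia.
  exists l1, l2, l0, (j - 3 * k); rewrite /n -(subnKC (ltnW j1)).
  by case: (occ_word_segment2 t2) => *; split=> //; lia.
have t3 : j - 6 * k <= 3 * k by lia.
exists l2, l0, l1, (j - 6 * k); rewrite /n -(subnKC (ltnW j2)).
by case: (occ_word_segment3 t3) => *; split=> //; lia.
Qed.

Lemma word_profile n : exists k, [/\ k * k <= n, n < 27 * k.+1 * k.+1,
  forall a, n <= 3 * occ word a 0 n + 6 * k.+1 /\ 3 * occ word a 0 n <= n + 6 * k.+1
  & exists a, 3 * occ word a 0 n + 3 * k <= n + 4].
Proof.
have [k /andP[kn nk]] := exists_stage n.
have /andP[kk _] := size_prefix_bounds k; have /andP[_ kk'] := size_prefix_bounds k.+1.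
move: nk kk'; rewrite size_prefixS => nk kk'.
have [j jk mn] : exists2 j, j <= 9 * k &
    size (prefix k) + 3 * j <= n <= size (prefix k) + 3 * j + 2.
  by exists ((n - size (prefix k)) %/ 3); lia.
have [x [y [z [t [xyz tk Ex Ey Ez]]]]] := occ_word_block jk.
set m := size (prefix k) + 3 * j in mn Ex Ey Ez.
have near a : occ word a 0 m <= occ word a 0 n <= occ word a 0 m + (n - m).
  have /andP[mn' _] := mn; have := occ_le word a m n.
  by rewrite (occ_cat word a (leq0n m) mn'); lia.
exists k; split; [lia | lia | move=> a | by exists z; have := near z; lia].
have := mem_uniq3 a xyz; rewrite !inE => /or3P[] /eqP ->.
- by have := near x; lia.
- by have := near y; lia.
- by have := near z; lia.
Qed.

Lemma word_balanced a n : exists k,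
  [/\ k * k <= n, n <= 3 * occ word a 0 n + 6 * k.+1 & 3 * occ word a 0 n <= n + 6 * k.+1].
Proof. by have [k [kk _ /(_ a)[lo hi] _]] := word_profile n; exists k. Qed.

Lemma word_dips c : exists N, forall n, N <= n -> exists a, 3 * occ word a 0 n + c <= n.
Proof.
exists (27 * (c + 5) * (c + 5)) => n Nn.
have [k [_ nk _ [a dip]]] := word_profile n; exists a.
suff : c + 4 <= k by lia.
rewrite leqNgt; apply/negP => kc.
have : k.+1 * k.+1 <= (c + 5) * (c + 5) by apply: leq_mul; lia.
lia.
Qed.

Lemma word_balanced_points c m : exists n, m < n /\ 3 * occ word c 0 n = n.
Proof.
pose k := m.+1; have /andP[kk _] := size_prefix_bounds k.
have kk3 : k <= 3 * k by lia.
have mk : m < k by [].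
have := mem_uniq3 c (isT : uniq [:: l0; l1; l2]); rewrite !inE => /or3P[] /eqP ->.
- exists (size (prefix k) + 3 * (6 * k + k)).
  by case: (occ_word_segment3 kk3) => _ E _; lia.
- exists (size (prefix k) + 3 * k).
  by case: (occ_word_segment1 kk3) => _ E _; lia.
- exists (size (prefix k) + 3 * (3 * k + k)).
  by case: (occ_word_segment2 kk3) => _ E _; lia.
Qed.

Theorem proposition4 :
  exists w : nat -> 'I_3,
    weak_abelian_periodic (identify l0 l1 w) /\
    weak_abelian_periodic (identify l0 l2 w) /\
    weak_abelian_periodic (identify l1 l2 w) /\
    ~ weak_abelian_periodic w.
Proof.
exists word; split; [|split; [|split]].
- by apply: (@wap_identify _ _ l2) => //; apply: word_balanced_points.
- by apply: (@wap_identify _ _ l1) => //; apply: word_balanced_points.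
- by apply: (@wap_identify _ _ l0) => //; apply: word_balanced_points.
- exact: (not_wap_of_balanced_with_dips word_balanced word_dips).
Qed.
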